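(* Let $\mathbf V=(V,\pi)$ be a persistence module of finite type over $\mathbb Z/2$, and assume that the barcode of $\mathbf V$ contains a bar of the form $(a,b]$ or of the form $(a,\infty)$; in the latter case set $b=\infty$. Then for every $\delta>0$ there exists $x\in V_{a+\delta}$ such that: (i) $\pi_{a+\delta,s}\,x\neq0$ for all $s$ with $a+\delta\le s\le b$; (ii) for all $s$ with $a+\delta\le s\le b$ and all $\sigma\le a$, $\pi_{a+\delta,s}\,x\notin\operatorname{im}\pi_{\sigma,s}$.
   Context: A persistence module $\mathbf V$ consists of finite-dimensional $\mathbb Z/2$-vector spaces $V_t$, $t\in\mathbb R$, and linear maps $\pi_{s,t}:V_s\to V_t$ for $s\le t$ with $\pi_{t,t}=\mathrm{Id}$ and $\pi_{s,t}=\pi_{r,t}\circ\pi_{s,r}$ for $s\le r\le t$. It is of finite type if there is a discrete closed set $\operatorname{spec}(\mathbf V)=\{t_0<t_1<\dots\}$ with $t_0>-\infty$ such that $\pi_{s,t}$ is an isomorphism for $s\le t$ in a neighborhood of any point outside the spectrum, and for $s\le t$ in $(r-\epsilon,r]$ for each spectral point $r$ and some $\epsilon>0$, and $V_t=0$ for $t\le t_0$. For an interval $\mathbb J$ of the form $(a,b]$ or $(a,\infty)$, the interval module $\mathbf Q(\mathbb J)$ has $Q_t=\mathbb Z/2$ for $t\in\mathbb J$, $0$ otherwise, with $\pi_{s,t}=\mathrm{Id}$ for $s,t\in\mathbb J$ and $0$ otherwise. By the structure theorem, a finite-type module is isomorphic to $\bigoplus_j\mathbf Q(\mathbb J_j)$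 for a unique multiset of intervals (each appearing finitely often), its barcode. *)

From HB Require Import structures.
From mathcomp Require Import all_boot all_order all_algebra.
From mathcomp Require Import reals.
Set Implicit Arguments. Unset Strict Implicit. Unset Printing Implicit Defensive.
Import Order.TTheory GRing.Theory Num.Theory.
Local Open Scope ring_scope.

(* A persistence module over Z/2 indexed by R:
   finite-dimensional 'F_2-spaces V t and linear maps pmor s t
   (the axioms only concern s <= r <= t). *)
Record pmod (R : realType) := PMod {
  V : R -> vectType 'F_2;
  pmor : forall s t : R, 'Hom(V s, V t);
  pi_id : forall t, pmor t t = \1%VF;
  pi_comp : forall s r t, s <= r -> r <= t -> pmor s t = (pmor r t \o pmor s r)%VF
}.

Definition is_iso (U W : vectType 'F_2) (f : 'Hom(U, W)) : Prop :=
  lker f = 0%VS /\ limg f = fullv.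

(* Finite type: a discrete closed (= locally finite) spectrum bounded below
   with least element t0, isomorphisms near non-spectral points and on
   (r - eps, r] for spectral r, and V t = 0 for t <= t0. *)
Definition finite_type (R : realType) (M : pmod R) : Prop :=
  exists S : R -> Prop,
    (forall m : R, exists l : seq R, forall x, S x -> x <= m -> x \in l) /\
    (exists t0, S t0 /\ (forall x, S x -> t0 <= x) /\
                (forall t, t <= t0 -> \dim (fullv : {vspace V M t}) = 0%N)) /\
    (forall r, ~ S r -> exists eps : R, 0 < eps /\
        forall s t, r - eps < s -> s <= t -> t < r + eps -> is_iso (pmor M s t)) /\
    (forall r, S r -> exists eps : R, 0 < eps /\
        forall s t, r - eps < s -> s <= t -> t <= r -> is_iso (pmor M s t)).

(* Intervals (a, b] (b = Some b) or (a, +oo) (b = None). *)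
Definition in_itv (R : realType) (a : R) (b : option R) (t : R) : bool :=
  (a < t) && (if b is Some b' then t <= b' else true).

Definition nonempty_itv (R : realType) (a : R) (b : option R) : bool :=
  if b is Some b' then a < b' else true.

(* An isomorphism from  \bigoplus_{i : I} Q(J i)  onto M, described by the
   images e i t in V t of the generators of the i-th interval summand:
   at each t, the e i t with t in J i form a basis of V t, and the
   structure maps act on them as in the interval modules. *)
Definition barcode_decomposition (R : realType) (M : pmod R) (I : eqType)
    (J : I -> R * option R) (e : forall (i : I) (t : R), V M t) : Prop :=
  (forall i, nonempty_itv (J i).1 (J i).2) /\
  (forall t, exists l : seq I, uniq l /\
      (forall i, i \in l <-> in_itv (J i).1 (J i).2 t) /\
      basis_of fullv [seq e i t | i <- l]) /\
  (forall i s t, in_itv (J i).1 (J i).2 s -> s <= t ->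
      pmor M s t (e i s) = if in_itv (J i).1 (J i).2 t then e i t else 0).

Definition in_barcode (R : realType) (M : pmod R) (a : R) (b : option R) : Prop :=
  exists (I : eqType) (J : I -> R * option R) (e : forall (i : I) (t : R), V M t),
    barcode_decomposition J e /\ exists i0, J i0 = (a, b).

Definition le_ext (R : realType) (s : R) (b : option R) : bool :=
  if b is Some b' then s <= b' else true.

From Pilot Require Import Defs.
From HB Require Import structures.
From mathcomp Require Import all_boot all_order all_algebra.
From mathcomp Require Import reals.
Set Implicit Arguments.
Unset Strict Implicit.
Unset Printing Implicit Defensive.
Import Order.TTheory GRing.Theory Num.Theory.
Local Open Scope ring_scope.

(* Take for x the generator e_{i0}(a + delta) of the summand Q((a, b]) in a
   barcode decomposition; its image at s in [a + delta, b] is the basis vector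
   e_{i0}(s).  The image of pmor sigma s is spanned by the images of the basis
   vectors at sigma, i.e. by the e_j(s) with j alive at sigma, and i0 is not
   alive at sigma <= a; so e_{i0}(s) lies outside that image, and in particular
   is nonzero. *)

Lemma free_notin_span_rem (K : fieldType) (vT : vectType K) (I : eqType)
    (f : I -> vT) (l : seq I) (i : I) :
  uniq l -> i \in l -> free [seq f j | j <- l] ->
  f i \notin <<[seq f j | j <- l & j != i]>>%VS.
Proof.
move=> ul il.
have /perm_map/perm_free-> : perm_eq l (i :: rem i l) by apply: perm_to_rem.
by rewrite /= free_cons rem_filter // => /andP[].
Qed.

Section BarcodeDecomposition.

Variables (R : realType) (M : pmod R) (I : eqType) (J : I -> R * option R).
Variable e : forall (i : I) (t : R), V M t.
Hypothesis hdec : barcode_decomposition J e.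

Local Notation alive i t := (Defs.in_itv (J i).1 (J i).2 t).

Lemma pmor_generator i s t :
  s <= t -> alive i s -> alive i t -> pmor M s t (e i s) = e i t.
Proof. by case: hdec => _ [_ hmor] st his hit; rewrite hmor // hit. Qed.

Lemma generator_notin_span_others i t : alive i t ->
  exists2 l : seq I, (forall j, j \in l <-> alive j t) &
    e i t \notin <<[seq e j t | j <- l & j != i]>>%VS.
Proof.
case: hdec => _ [/(_ t)[l [ul [ml /andP[_ fr]]]] _] hit.
by exists l => //; apply: free_notin_span_rem => //; apply/ml.
Qed.

Lemma generator_neq0 i t : alive i t -> e i t != 0.
Proof.
case/generator_notin_span_others => l _.
by apply: contra => /eqP->; apply: mem0v.
Qed.

Lemma limg_pmor_subv_alive sigma s (l : seq I) :
  sigma <= s -> (forall j, j \in l <-> alive j s) ->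
  (limg (pmor M sigma s) <= <<[seq e j s | j <- l & alive j sigma]>>)%VS.
Proof.
case: hdec => _ [/(_ sigma)[ls [_ [mls /andP[/eqP <- _]]]] hmor] hss ml.
rewrite limg_span; apply/span_subvP => _ /mapP[_ /mapP[j /mls jsig ->] ->].
rewrite hmor //; case: ifP => [js | _]; last exact: mem0v.
by apply/memv_span/map_f; rewrite mem_filter jsig; apply/ml.
Qed.

Lemma generator_notin_limg i sigma s :
  sigma <= s -> alive i s -> ~~ alive i sigma ->
  e i s \notin limg (pmor M sigma s).
Proof.
move=> hss /generator_notin_span_others[l ml notin] dead.
apply: contra notin => /(subvP (limg_pmor_subv_alive hss ml)).
apply: subvP; apply: sub_span => x /mapP[j].
rewrite mem_filter => /andP[jsig jl] ->.
apply: map_f; rewrite mem_filter jl andbT.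
by apply: contraNneq dead => <-.
Qed.

End BarcodeDecomposition.

Theorem lemma3p4 (R : realType) (M : pmod R) (hM : finite_type M)
    (a : R) (b : option R) (hbar : in_barcode M a b)
    (delta : R) (hdelta : 0 < delta) :
  exists x : V M (a + delta),
    (forall s : R, a + delta <= s -> le_ext s b -> pmor M (a + delta) s x != 0) /\
    (forall s sigma : R, a + delta <= s -> le_ext s b -> sigma <= a ->
        pmor M (a + delta) s x \notin limg (pmor M sigma s)).
Proof.
case: hbar => I [J [e [hdec [i0 hJ]]]].
have le_ext_start (s : R) : a + delta <= s -> le_ext s b -> le_ext (a + delta) b.
  by case: b {hJ} => //= b'; apply: le_trans.
have alive_bar (s : R) : a + delta <= s -> le_ext s b -> Defs.in_itv (J i0).1 (J i0).2 s.
  by move=> hs hb; rewrite hJ /Defs.in_itv /= (lt_le_trans _ hs) ?ltrDl.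
have image_x (s : R) : a + delta <= s -> le_ext s b ->
    pmor M (a + delta) s (e i0 (a + delta)) = e i0 s.
  move=> hs hb; apply: (pmor_generator hdec hs) (alive_bar s hs hb).
  exact: (alive_bar _ (lexx _) (le_ext_start s hs hb)).
exists (e i0 (a + delta)); split=> [s hs hb | s sigma hs hb hsig].
  by rewrite image_x // (generator_neq0 hdec (alive_bar s hs hb)).
have sigma_le_s : sigma <= s by rewrite (le_trans hsig) // (le_trans _ hs) // lerDl ltW.
have dead_at_sigma : ~~ Defs.in_itv (J i0).1 (J i0).2 sigma.
  by rewrite hJ /Defs.in_itv /= ltNge hsig.
by rewrite image_x // (generator_notin_limg hdec sigma_le_s (alive_bar s hs hb) dead_at_sigma).
Qed.
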